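(* Let $\mathcal{V}$ be a non-trivial quantale, $\mathsf{F}\colon\mathbf{Set}\to\mathbf{Set}$ a functor, and $\widehat{\mathsf{F}}\colon\mathbf{Rel}(\mathcal{V})\to\mathbf{Rel}(\mathcal{V})$ a lax extension of $\mathsf{F}$, with induced lifting $\widehat{\mathsf{F}}\colon\mathbf{Cat}(\mathcal{V})\to\mathbf{Cat}(\mathcal{V})$, $(X,a)\mapsto(\mathsf{F}X,\widehat{\mathsf{F}}a)$. If the lax extension $\widehat{\mathsf{F}}$ is the Kantorovich extension $\widehat{\mathsf{F}}^\Lambda$ with respect to a class $\Lambda$ of monotone $\mathcal{V}$-valued predicate liftings for $\mathsf{F}$, then the induced lifting $\widehat{\mathsf{F}}\colon\mathbf{Cat}(\mathcal{V})\to\mathbf{Cat}(\mathcal{V})$ is the Kantorovich lifting $\mathsf{F}^\Lambda$ of $\mathsf{F}$ with respect to $\Lambda$.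
   Context: A quantale $(\mathcal{V},\otimes,k)$ is a complete lattice with a commutative monoid structure such that each $u\otimes-$ preserves joins; $\hom(u,-)$ is its right adjoint; non-trivial means $\bot\ne\top$. A $\mathcal{V}$-category is $(X,a)$ with $a\colon X\times X\to\mathcal{V}$, $k\le a(x,x)$, $a(x,y)\otimes a(y,z)\le a(x,z)$; $\mathcal{V}$-functors satisfy $a(x,y)\le b(f(x),f(y))$; category $\mathbf{Cat}(\mathcal{V})$. A $\mathcal{V}$-relation $r\colon X\nrightarrow Y$ is a map $X\times Y\to\mathcal{V}$; composition of $r\colon X\nrightarrow Y$, $s\colon Y\nrightarrow Z$ is $(s\cdot r)(x,z)=\bigvee_y r(x,y)\otimes s(y,z)$; the identity $1_X$ is $k$ on the diagonal and $\bot$ elsewhere; a function $f$ is the $\mathcal{V}$-relation with value $k$ on its graph and $\bot$ elsewhere; $r^\circ(y,x)=r(x,y)$; relations are ordered pointwise. For $r\colon X\nrightarrow Y$, $s\colon X\nrightarrow Z$, the extension $r\multimap s\colon Z\nrightarrow Y$ is $(r\multimap s)(z,y)=\bigwedge_x\hom(s(x,z),r(x,y))$. A lax extension of $\mathsf{F}$ assigns to each $r\colon X\nrightarrow Y$ a $\widehat{\mathsf{F}}r\colon\mathsf{F}X\nrightarrow\mathsf{F}Y$ such that (L1) $r\le r'\Rightarrow\widehat{\mathsf{F}}r\le\widehat{\mathsf{F}}r'$, (L2) $\widehat{\mathsf{F}}s\cdot\widehat{\mathsf{F}}r\le\widehat{\mathsf{F}}(s\cdot r)$, (L3) $\mathsf{F}f\le\widehat{\mathsf{F}}f$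 and $(\mathsf{F}f)^\circ\le\widehat{\mathsf{F}}(f^\circ)$ for functions $f$. A $\kappa$-ary $\mathcal{V}$-valued predicate lifting is a natural transformation $\lambda\colon\mathbf{Set}(-,\mathcal{V}^\kappa)\to\mathbf{Set}(\mathsf{F}-,\mathcal{V})$; identifying $f\colon X\to\mathcal{V}^\kappa$ with the $\mathcal{V}$-relation $\kappa\nrightarrow X$, $(i,x)\mapsto f(x)(i)$, and maps $\mathsf{F}X\to\mathcal{V}$ with $\mathcal{V}$-relations $1\nrightarrow\mathsf{F}X$, each component is a map from $\mathcal{V}$-relations $\kappa\nrightarrow X$ to $\mathcal{V}$-relations $1\nrightarrow\mathsf{F}X$; $\lambda$ is monotone if its components are monotone for the pointwise order. The Kantorovich extension w.r.t. a class $\Lambda$ of monotone predicate liftings is $\widehat{\mathsf{F}}^\Lambda=\bigwedge_{\lambda\in\Lambda}\widehat{\mathsf{F}}^\lambda$ with $\widehat{\mathsf{F}}^\lambda r=\bigwedge_{g\colon\kappa\nrightarrow X}\lambda(r\cdot g)\multimap\lambda(g)$ for $r\colon X\nrightarrow Y$. The Kantorovich lifting $\mathsf{F}^\Lambda$ sends $(X,a)$ to $\mathsf{F}X$ with structure $c(\mathfrak{x},\mathfrak{y})=\bigwedge\hom(\lambda_X(f)(\mathfrak{x}),\lambda_X(f)(\mathfrak{y}))$ over all $\kappa$-ary $\lambda\in\Lambda$ and $\mathcal{V}$-functors $f\colon(X,a)\to\mathcal{V}^\kappa$, where $\mathcal{V}^\kappa$ has structure $[f,g]=\bigwedge_i\hom(f(i),g(i))$.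 *)

Record quantale := Quantale {
  qcar :> Type;
  qle : qcar -> qcar -> Prop;
  qle_refl : forall x, qle x x;
  qle_trans : forall x y z, qle x y -> qle y z -> qle x z;
  qle_antisym : forall x y, qle x y -> qle y x -> x = y;
  qsup : (qcar -> Prop) -> qcar;
  qsup_ub : forall (S : qcar -> Prop) x, S x -> qle x (qsup S);
  qsup_least : forall (S : qcar -> Prop) y,
      (forall x, S x -> qle x y) -> qle (qsup S) y;
  qtens : qcar -> qcar -> qcar;
  qk : qcar;
  qtens_assoc : forall x y z, qtens x (qtens y z) = qtens (qtens x y) z;
  qtens_comm : forall x y, qtens x y = qtens y x;
  qtens_unit : forall x, qtens qk x = x;
  qtens_sup : forall u (S : qcar -> Prop),
      qtens u (qsup S) = qsup (fun v => exists w, S w /\ v = qtens u w)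
}.

Arguments qle {q}.
Arguments qsup {q}.
Arguments qtens {q}.
Arguments qk {q}.

Section QuantaleOps.
Variable V : quantale.

Definition qbot : V := qsup (fun _ => False).
Definition qtop : V := qsup (fun _ => True).
Definition qinf (S : V -> Prop) : V := qsup (fun w => forall s, S s -> qle w s).
(* hom(u,-) : right adjoint of u (x) - *)
Definition qhom (u v : V) : V := qsup (fun w => qle (qtens u w) v).
Definition bigsup {I : Type} (f : I -> V) : V := qsup (fun v => exists i, v = f i).
Definition biginf {I : Type} (f : I -> V) : V := qinf (fun v => exists i, v = f i).

Definition nontrivial : Prop := qbot <> qtop.

Definition rel (X Y : Type) := X -> Y -> V.

Definition rcomp {X Y Z : Type} (s : rel Y Z) (r : rel X Y) : rel X Z :=
  fun x z => bigsup (fun y => qtens (r x y) (s y z)).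

(* a function as a V-relation: k on its graph, bottom elsewhere *)
Definition graph {X Y : Type} (f : X -> Y) : rel X Y :=
  fun x y => qsup (fun v => v = qk /\ f x = y).

Definition rid (X : Type) : rel X X := graph (fun x => x).

Definition conv {X Y : Type} (r : rel X Y) : rel Y X := fun y x => r x y.

Definition rle {X Y : Type} (r r' : rel X Y) : Prop :=
  forall x y, qle (r x y) (r' x y).

Definition rext {X Y Z : Type} (r : rel X Y) (s : rel X Z) : rel Z Y :=
  fun z y => biginf (fun x => qhom (s x z) (r x y)).

Definition is_vcat {X : Type} (a : rel X X) : Prop :=
  (forall x, qle qk (a x x)) /\
  (forall x y z, qle (qtens (a x y) (a y z)) (a x z)).

Definition vfunctor {X Y : Type} (a : rel X X) (b : rel Y Y) (f : X -> Y) : Prop :=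
  forall x y, qle (a x y) (b (f x) (f y)).

Definition powstruct (kappa : Type) : rel (kappa -> V) (kappa -> V) :=
  fun f g => biginf (fun i => qhom (f i) (g i)).

End QuantaleOps.

Arguments qbot {V}.
Arguments qtop {V}.
Arguments qinf {V}.
Arguments qhom {V}.
Arguments bigsup {V I}.
Arguments biginf {V I}.

Record functor := Functor {
  fobj :> Type -> Type;
  fmap : forall (X Y : Type), (X -> Y) -> fobj X -> fobj Y;
  fmap_id : forall (X : Type) (t : fobj X), fmap X X (fun x => x) t = t;
  fmap_comp : forall (X Y Z : Type) (f : X -> Y) (g : Y -> Z) (t : fobj X),
      fmap X Z (fun x => g (f x)) t = fmap Y Z g (fmap X Y f t)
}.
Arguments fmap {_ X Y}.

Definition lax_extension (V : quantale) (F : functor)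
    (Fhat : forall X Y : Type, rel V X Y -> rel V (F X) (F Y)) : Prop :=
  (forall X Y (r r' : rel V X Y), rle V r r' -> rle V (Fhat X Y r) (Fhat X Y r')) /\
  (forall X Y Z (r : rel V X Y) (s : rel V Y Z),
      rle V (rcomp V (Fhat Y Z s) (Fhat X Y r)) (Fhat X Z (rcomp V s r))) /\
  (forall X Y (f : X -> Y),
      rle V (graph V (fmap f)) (Fhat X Y (graph V f)) /\
      rle V (conv V (graph V (fmap f))) (Fhat Y X (conv V (graph V f)))).

Record predlift (V : quantale) (F : functor) (kappa : Type) := PredLift {
  plift :> forall X : Type, (X -> kappa -> V) -> F X -> V;
  plift_nat : forall (X Y : Type) (h : Y -> X) (f : X -> kappa -> V) (t : F Y),
      plift Y (fun y => f (h y)) t = plift X f (fmap h t)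
}.
Arguments plift {V F kappa}.

Definition monotone_plift {V : quantale} {F : functor} {kappa : Type}
    (lam : predlift V F kappa) : Prop :=
  forall (X : Type) (f f' : X -> kappa -> V),
    (forall x i, qle (f x i) (f' x i)) ->
    forall t, qle (lam X f t) (lam X f' t).

(* identification of maps X -> V^kappa with V-relations kappa -/-> X and of
   maps F X -> V with V-relations 1 -/-> F X *)
Definition map_of_rel {V : quantale} {kappa X : Type} (g : rel V kappa X)
  : X -> kappa -> V := fun x i => g i x.

Definition lam_rel {V : quantale} {F : functor} {kappa : Type}
    (lam : predlift V F kappa) (X : Type) (g : rel V kappa X) : rel V unit (F X) :=
  fun _ t => lam X (map_of_rel g) t.

Definition kant_ext1 {V : quantale} {F : functor} {kappa : Type}
    (lam : predlift V F kappa) {X Y : Type} (r : rel V X Y) : rel V (F X) (F Y) :=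
  fun s t => biginf (fun g : rel V kappa X =>
     rext V (lam_rel lam Y (rcomp V r g)) (lam_rel lam X g) s t).

Definition kant_ext {V : quantale} {F : functor} {I : Type} {kappa : I -> Type}
    (Lam : forall i, predlift V F (kappa i)) {X Y : Type} (r : rel V X Y)
    : rel V (F X) (F Y) :=
  fun s t => biginf (fun i => kant_ext1 (Lam i) r s t).

Definition kant_lift {V : quantale} {F : functor} {I : Type} {kappa : I -> Type}
    (Lam : forall i, predlift V F (kappa i)) {X : Type} (a : rel V X X)
    : rel V (F X) (F X) :=
  fun s t => qinf (fun v => exists (i : I) (f : X -> kappa i -> V),
      vfunctor V a (powstruct V (kappa i)) f /\
      v = qhom (Lam i X f s) (Lam i X f t)).

(* For a V-functor f : (X, a) -> V^kappa, the V-relation g = f^T : kappa -/-> X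
   is a-closed (a . g <= g), so by monotonicity of the lifting the summand of the
   Kantorovich extension at g is below [hom(lam f s, lam f t)].  Conversely, for
   any g the map f := (a . g)^T is a V-functor by transitivity of a, and g <= a . g
   by reflexivity, so [hom(lam f s, lam f t)] is below the summand at g.  Hence the
   two infima defining [kant_ext Lam a] and [kant_lift Lam a] coincide. *)


Section QuantaleFacts.
Variable V : quantale.

Lemma qsup_pair (x y : V) : qle x y -> qsup (fun w => w = x \/ w = y) = y.
Proof.
  intro Hxy. apply qle_antisym.
  - apply qsup_least. intros w [-> | ->]; [exact Hxy | apply qle_refl].
  - apply qsup_ub. now right.
Qed.

(* Monotonicity of [u (x) -] is the join-preservation axiom applied to {x, y}. *)
Lemma qtens_monor (u x y : V) : qle x y -> qle (qtens u x) (qtens u y).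
Proof.
  intro Hxy. rewrite <- (qsup_pair x y Hxy), qtens_sup.
  apply qsup_ub. exists x. split; [now left | reflexivity].
Qed.

Lemma qtens_monol (u x y : V) : qle x y -> qle (qtens x u) (qtens y u).
Proof. intro Hxy. rewrite (qtens_comm _ x), (qtens_comm _ y). now apply qtens_monor. Qed.

Lemma qtens_k (x : V) : qtens x qk = x.
Proof. now rewrite qtens_comm, qtens_unit. Qed.

Lemma qhom_eval (u v : V) : qle (qtens u (qhom u v)) v.
Proof.
  unfold qhom. rewrite qtens_sup. apply qsup_least.
  intros x [w [Hw ->]]. exact Hw.
Qed.

Lemma qle_hom (u w v : V) : qle (qtens u w) v <-> qle w (qhom u v).
Proof.
  split; intro H.
  - now apply qsup_ub.
  - eapply qle_trans; [apply qtens_monor, H | apply qhom_eval].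
Qed.

Lemma qhom_monor (u v v' : V) : qle v v' -> qle (qhom u v) (qhom u v').
Proof. intro Hv. apply qle_hom. eapply qle_trans; [apply qhom_eval | exact Hv]. Qed.

Lemma qhom_antil (u u' v : V) : qle u u' -> qle (qhom u' v) (qhom u v).
Proof.
  intro Hu. apply qle_hom.
  eapply qle_trans; [apply qtens_monol, Hu | apply qhom_eval].
Qed.

Lemma qinf_lb (S : V -> Prop) s : S s -> qle (qinf S) s.
Proof. intro Hs. apply qsup_least. intros w Hw. now apply Hw. Qed.

Lemma qinf_glb (S : V -> Prop) y : (forall s, S s -> qle y s) -> qle y (qinf S).
Proof. intro H. now apply qsup_ub. Qed.

Lemma biginf_lb {J : Type} (h : J -> V) j : qle (biginf h) (h j).
Proof. apply qinf_lb. now exists j. Qed.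

Lemma biginf_glb {J : Type} (h : J -> V) y :
  (forall j, qle y (h j)) -> qle y (biginf h).
Proof. intro H. apply qinf_glb. intros s [j ->]. apply H. Qed.

Lemma biginf_unit (h : unit -> V) : biginf h = h tt.
Proof.
  apply qle_antisym; [apply biginf_lb |].
  apply biginf_glb. intros []. apply qle_refl.
Qed.

Lemma bigsup_ub {J : Type} (h : J -> V) j : qle (h j) (bigsup h).
Proof. apply qsup_ub. now exists j. Qed.

Lemma bigsup_least {J : Type} (h : J -> V) y :
  (forall j, qle (h j) y) -> qle (bigsup h) y.
Proof. intro H. apply qsup_least. intros s [j ->]. apply H. Qed.

Lemma qtens_bigsup_le {J : Type} (u : V) (h : J -> V) v :
  (forall j, qle (qtens u (h j)) v) -> qle (qtens u (bigsup h)) v.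
Proof.
  intro H. unfold bigsup. rewrite qtens_sup. apply qsup_least.
  intros x [w [[j ->] ->]]. apply H.
Qed.

End QuantaleFacts.

Section ClosedRelations.
Variables (V : quantale) (kappa X : Type) (a : rel V X X).

Lemma vfunctor_rcomp_le (f : X -> kappa -> V) :
  vfunctor V a (powstruct V kappa) f ->
  rle V (rcomp V a (fun i x => f x i)) (fun i x => f x i).
Proof.
  intros Hf i y. apply bigsup_least. intro x.
  apply qle_hom. eapply qle_trans; [apply Hf |].
  apply (biginf_lb V (fun j => qhom (f x j) (f y j)) i).
Qed.

Lemma vfunctor_rcomp (g : rel V kappa X) :
  (forall x y z, qle (qtens (a x y) (a y z)) (a x z)) ->
  vfunctor V a (powstruct V kappa) (map_of_rel (rcomp V a g)).
Proof.
  intros Htrans x y. apply biginf_glb. intro i.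
  apply qle_hom. rewrite qtens_comm. apply qtens_bigsup_le. intro z.
  rewrite (qtens_comm V (a x y)), <- qtens_assoc.
  eapply qle_trans; [apply qtens_monor, Htrans |].
  apply (bigsup_ub V (fun z => qtens (g i z) (a z y)) z).
Qed.

Lemma rle_rcomp_refl (g : rel V kappa X) :
  (forall x, qle qk (a x x)) -> rle V g (rcomp V a g).
Proof.
  intros Hrefl i x.
  eapply qle_trans; [| apply (bigsup_ub V (fun z => qtens (g i z) (a z x)) x)].
  apply (qle_trans _ _ (qtens (g i x) qk)).
  - rewrite qtens_k. apply qle_refl.
  - apply qtens_monor, Hrefl.
Qed.

End ClosedRelations.

Section KantorovichSummands.
Variables (V : quantale) (F : functor) (kappa : Type) (lam : predlift V F kappa).
Hypothesis lam_mono : monotone_plift lam.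
Variables (X : Type) (a : rel V X X).

Lemma rext_lam_rel (g h : rel V kappa X) s t :
  rext V (lam_rel lam X h) (lam_rel lam X g) s t
  = qhom (lam X (map_of_rel g) s) (lam X (map_of_rel h) t).
Proof. apply biginf_unit. Qed.

Lemma kant_ext1_le_hom (f : X -> kappa -> V) s t :
  vfunctor V a (powstruct V kappa) f ->
  qle (kant_ext1 lam a s t) (qhom (lam X f s) (lam X f t)).
Proof.
  intro Hf.
  eapply qle_trans; [apply (biginf_lb V _ (fun i x => f x i)) |].
  rewrite rext_lam_rel. apply qhom_monor, lam_mono.
  intros x i. apply (vfunctor_rcomp_le V kappa X a f Hf).
Qed.

Lemma hom_rcomp_le_rext (g : rel V kappa X) s t :
  (forall x, qle qk (a x x)) ->
  qle (qhom (lam X (map_of_rel (rcomp V a g)) s) (lam X (map_of_rel (rcomp V a g)) t))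
      (rext V (lam_rel lam X (rcomp V a g)) (lam_rel lam X g) s t).
Proof.
  intro Hrefl. rewrite rext_lam_rel. apply qhom_antil, lam_mono.
  intros x i. apply (rle_rcomp_refl V kappa X a g Hrefl).
Qed.

End KantorovichSummands.

Section KantorovichComparison.
Variables (V : quantale) (F : functor) (I : Type) (kappa : I -> Type).
Variable Lam : forall i, predlift V F (kappa i).
Hypothesis Lam_mono : forall i, monotone_plift (Lam i).
Variables (X : Type) (a : rel V X X).

Lemma kant_ext_le_kant_lift s t : qle (kant_ext Lam a s t) (kant_lift Lam a s t).
Proof.
  apply qinf_glb. intros v [i [f [Hf ->]]].
  eapply qle_trans; [apply (biginf_lb V _ i) |].
  now apply kant_ext1_le_hom.
Qed.

Lemma kant_lift_le_kant_ext s t :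
  is_vcat V a -> qle (kant_lift Lam a s t) (kant_ext Lam a s t).
Proof.
  intros [Hrefl Htrans].
  apply biginf_glb. intro i. apply biginf_glb. intro g.
  eapply qle_trans; [| now apply hom_rcomp_le_rext].
  apply qinf_lb. exists i, (map_of_rel (rcomp V a g)).
  split; [now apply vfunctor_rcomp | reflexivity].
Qed.

End KantorovichComparison.

(* Nontriviality of V and the lax-extension axioms are what make
   [(X, a) |-> (F X, Fhat a)] a functor on V-categories. *)
Theorem theorem5 (V : quantale) (F : functor) (I : Type) (kappa : I -> Type)
    (Lam : forall i, predlift V F (kappa i))
    (Fhat : forall X Y : Type, rel V X Y -> rel V (F X) (F Y)) :
  nontrivial V ->
  (forall i, monotone_plift (Lam i)) ->
  lax_extension V F Fhat ->
  (forall (X Y : Type) (r : rel V X Y) s t, Fhat X Y r s t = kant_ext Lam r s t) ->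
  forall (X : Type) (a : rel V X X), is_vcat V a ->
    forall s t : F X, Fhat X X a s t = kant_lift Lam a s t.
Proof.
  intros _ Lam_mono _ Fhat_kant X a a_vcat s t.
  rewrite Fhat_kant. apply qle_antisym.
  - now apply kant_ext_le_kant_lift.
  - now apply kant_lift_le_kant_ext.
Qed.
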